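(* Let $n\ge2$ and let $x\in\mathbb{C}^{n\times n}$ be generic (as defined in the context). For each $1\le k\le n$ fix an ordering $\mu^{(k)}_1,\ldots,\mu^{(k)}_k$ of the eigenvalues of $x_k$ (note $x^T$ has the same leading principal eigenvalues, so $x^T$ is also generic and the same orderings are used for it). Let $b_m$ ($1\le m\le n-1$) be the dual coordinates of $x$ and $\tilde b_m$ those of $x^{T}$, defined with respect to these orderings. Then for $1\le m\le n-1$, \[ \operatorname{diag}(\tilde b_m)=\Pi_m\operatorname{diag}(b_m)^{-1}\Sigma_m, \] where $\Sigma_m=-P_{m+1}(\Lambda_m)\bigl(P_m'(\Lambda_m)\bigr)^{-1}$ and $\Pi_m$ is the $m\times m$ diagonal matrix defined in the context.
   Context: For a square matrix $x$, $x_k$ is its leading principal $k\times k$ submatrix, $E(x_k)$ its eigenvalue multiset, and $P_k(\lambda)=\det(\lambda I_k-x_k)$. A matrix $x\in\mathbb{C}^{n\times n}$ is generic if for every $1\le k\le n$ the eigenvalues of $x_k$ are distinct and for every $1\le k\le n-1$, $E(x_k)\cap E(x_{k+1})=\varnothing$. Let $\Lambda_k=\operatorname{diag}(\mu^{(k)}_1,\ldots,\mu^{(k)}_k)$. For generic $x$ and $1\le m\le n-1$, let $g_m\in\mathrm{GL}(m)$ be the unique matrix with $x_m=g_m\Lambda_mg_m^{-1}$ whose last row consists of ones; the dual coordinates $b_m\in\mathbb{C}^m$ (and $c_m\in\mathbb{C}^m$, $\delta_{m+1}\in\mathbb{C}$) of $x$ are defined by $\begin{pmatrix} g_m^{-1}&0\\0&1\end{pmatrix}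 x_{m+1}\begin{pmatrix} g_m&0\\0&1\end{pmatrix}=\begin{pmatrix}\Lambda_m & c_m\\ b_m^{T} & \delta_{m+1}\end{pmatrix}$. $\operatorname{diag}(v)$ is the diagonal matrix with diagonal $v$; $P(\Lambda_m)$ is the diagonal matrix with entries $P(\mu^{(m)}_i)$. $\Pi_m$ is the $m\times m$ diagonal matrix with entries \[ (\Pi_m)_{jj}=1-\sum_{i=1}^{m-1}\frac{\prod_{k=1}^{m}(\mu^{(m-1)}_i-\mu^{(m)}_k)}{(\mu^{(m)}_j-\mu^{(m-1)}_i)^2\prod_{k\ne i,\,1\le k\le m-1}(\mu^{(m-1)}_i-\mu^{(m-1)}_k)},\qquad 1\le j\le m \] (so $\Pi_1=(1)$); it is the diagonal matrix relating row and column eigenvectors of the arrow matrix $\begin{pmatrix}\Lambda_{m-1}&c_{m-1}\\ b_{m-1}^T&\delta_m\end{pmatrix}$, equivalently the diagonal matrix for which the last row of $(g_m^{-1})^{T}\Pi_m$ consists of ones. *)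

From HB Require Import structures.
From mathcomp Require Import all_boot all_order all_algebra.
Set Implicit Arguments. Unset Strict Implicit. Unset Printing Implicit Defensive.
Import Order.TTheory GRing.Theory Num.Theory.
Local Open Scope ring_scope.

Section Defs.
Variable C : numClosedFieldType.

(* entry (i,j) of x, with 0 outside the range (never used for k <= n) *)
Definition mxentry n (x : 'M[C]_n) (i j : nat) : C :=
  match (insub i : option 'I_n), (insub j : option 'I_n) with
  | Some i', Some j' => x i' j'
  | _, _ => 0
  end.

Definition lead_sub n (x : 'M[C]_n) (k : nat) : 'M[C]_k :=
  \matrix_(i < k, j < k) mxentry x i j.

Definition Pk n (x : 'M[C]_n) (k : nat) : {poly C} := char_poly (lead_sub x k).

Definition eigen_multiset k (a : 'M[C]_k) (s : seq C) : Prop :=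
  char_poly a = \prod_(z <- s) ('X - z%:P).

Definition generic n (x : 'M[C]_n) : Prop :=
  (forall k s, (1 <= k <= n)%N -> eigen_multiset (lead_sub x k) s -> uniq s) /\
  (forall k s t, (1 <= k <= n - 1)%N ->
     eigen_multiset (lead_sub x k) s -> eigen_multiset (lead_sub x k.+1) t ->
     forall z, z \in s -> z \notin t).

Definition eigen_ordering k (a : 'M[C]_k) (mu : 'I_k -> C) : Prop :=
  char_poly a = \prod_(i < k) ('X - (mu i)%:P).

Definition Lam m (mu : 'I_m -> C) : 'M[C]_m := diag_mx (\row_i mu i).

Definition polyLam (p : {poly C}) m (mu : 'I_m -> C) : 'M[C]_m :=
  diag_mx (\row_i p.[mu i]).

Definition dual_b n (x : 'M[C]_n) (mu : forall k, 'I_k -> C) (m : nat)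
    (b : 'rV[C]_m) : Prop :=
  exists (g : 'M[C]_m) (c : 'cV[C]_m) (delta : C),
    [/\ g \in unitmx,
        (forall i j : 'I_m, i.+1 = m -> g i j = 1),
        lead_sub x m = g *m Lam (mu m) *m invmx g &
        (block_mx (invmx g) 0 0 1%:M : 'M[C]_(m + 1)) *m lead_sub x (m + 1)
          *m (block_mx g 0 0 1%:M : 'M[C]_(m + 1))
        = block_mx (Lam (mu m)) c b delta%:M].

Definition Pi (mu : forall k, 'I_k -> C) (m : nat) : 'M[C]_m :=
  diag_mx (\row_(j < m)
    (1 - \sum_(i < m.-1)
       (\prod_(k < m) (mu m.-1 i - mu m k))
       / ((mu m j - mu m.-1 i) ^+ 2 *
          \prod_(k < m.-1 | k != i) (mu m.-1 i - mu m.-1 k)))).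

Definition Sigma n (x : 'M[C]_n) (mu : forall k, 'I_k -> C) (m : nat) : 'M[C]_m :=
  - (polyLam (Pk x m.+1) (mu m) *m invmx (polyLam (Pk x m)^`() (mu m))).

End Defs.

Arguments dual_b {C n} x mu m b.
Arguments Pi {C} mu m.
Arguments Sigma {C n} x mu m.
Arguments lead_sub {C n} x k.

(* Write m = p + 1, z_j = mu_(m) j, Q_j = \prod_(k != j) (z_j - z_k) and
   w_j = (g^-1)_(j, m) for the matrix g of the dual coordinates of x.
   - P_(m-1)(z_j) is the last diagonal cofactor of z_j - x_m = g (z_j - Lam_m) g^-1;
     only the j-th entry of the adjugate of the diagonal matrix survives, so
     P_(m-1)(z_j) = Q_j w_j.
   - P_(m+1)(z_j) is the determinant of z_j minus the arrow matrix, in which the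
     j-th diagonal entry vanishes, so P_(m+1)(z_j) = - c_j b_j Q_j and
     Sigma_m = diag(c_j b_j).
   - The sum defining (Pi_m)_jj is a residue sum for the monic polynomial
     \prod_(k != j) (X - z_k); by Lagrange interpolation at z_j and the
     eigenvalues of x_(m-1), (Pi_m)_jj = Q_j / P_(m-1)(z_j) = 1 / w_j.
   - If h is the normalised eigenvector matrix of x_m^T, then g^T h commutes with
     Lam_m, hence is diagonal, and its last row forces h = (g^-1)^T diag(1/w).
     Therefore bt = c^T diag(1/w), i.e. bt_j = c_j / w_j.
   Altogether (Pi_m diag(b)^-1 Sigma_m)_jj = (1/w_j) (1/b_j) c_j b_j = bt_j.
   Genericity gives distinct eigenvalues and b_j != 0 (since P_(m+1)(z_j) != 0). *)

From HB Require Import structures.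
From mathcomp Require Import all_boot all_order all_algebra.
From mathcomp Require Import fingroup perm zify ring.
Set Implicit Arguments. Unset Strict Implicit. Unset Printing Implicit Defensive.
Import Order.TTheory GRing.Theory Num.Theory.
Local Open Scope ring_scope.

Lemma horner_prod_XsubC (R : comNzRingType) (I : Type) (r : seq I) (P : pred I)
    (F : I -> R) (z : R) :
  (\prod_(i <- r | P i) ('X - (F i)%:P)).[z] = \prod_(i <- r | P i) (z - F i).
Proof. by rewrite horner_prod; apply: eq_bigr => i _; rewrite hornerXsubC. Qed.

Lemma deriv_prod_XsubC_at (R : comNzRingType) m (c : 'I_m -> R) (j : 'I_m) :
  (\prod_(i < m) ('X - (c i)%:P))^`().[c j] = \prod_(k < m | k != j) (c j - c k).
Proof.
rewrite (bigD1 j) //= derivM derivXsubC mul1r hornerD hornerM hornerXsubC.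
by rewrite subrr mul0r addr0 horner_prod_XsubC.
Qed.

Lemma lagrange_lead_coef (F : fieldType) (s : seq F) (p : {poly F}) :
  uniq s -> (size p <= size s)%N ->
  p`_(size s).-1 = \sum_(a <- s) p.[a] / \prod_(b <- s | b != a) (a - b).
Proof.
move=> s_uniq p_size.
pose ell a := \prod_(b <- s | b != a) ('X - b%:P).
have ell_size a : a \in s -> size (ell a) = size s.
  move=> a_s; rewrite /ell -big_filter size_prod_XsubC size_filter.
  by rewrite -(count_predC (pred1 a) s) count_uniq_mem // a_s add1n.
have ell_root a c : c \in s -> c != a -> (ell a).[c] = 0.
  move=> c_s ca; rewrite horner_prod_XsubC -big_filter (bigD1_seq c) /=.
  - by rewrite subrr mul0r.
  - by rewrite mem_filter ca.
  - exact: filter_uniq.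
have ell_self a : (ell a).[a] != 0.
  rewrite horner_prod_XsubC prodf_seq_neq0; apply/allP => b _.
  by apply/implyP; rewrite subr_eq0 eq_sym.
pose L := \sum_(a <- s) (p.[a] / (ell a).[a]) *: ell a.
have pL : p = L.
  apply/eqP; rewrite -subr_eq0; apply/eqP/(roots_geq_poly_eq0 (rs := s)) => //.
    apply/allP => c c_s; rewrite rootE hornerD hornerN horner_sum.
    rewrite (bigD1_seq c) //= big1 => [|a ac]; last first.
      by rewrite hornerZ (ell_root a c) ?mulr0 // eq_sym.
    by rewrite hornerZ addr0 divfK ?subrr.
  rewrite (leq_trans (size_polyD _ _)) // size_polyN geq_max p_size.
  rewrite (leq_trans (size_sum _ _ _)) //; apply/bigmax_leqP_seq => a a_s _.
  by rewrite (leq_trans (size_scale_leq _ _)) ?ell_size.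
rewrite {1}pL coef_sum; apply: eq_big_seq => a a_s.
have /monicP : ell a \is monic by apply: monic_prod_XsubC.
by rewrite coefZ /lead_coef ell_size // => ->; rewrite mulr1 horner_prod_XsubC.
Qed.

Lemma monic_residue_sum (F : fieldType) N (nu : 'I_N -> F) (z : F) (f : {poly F}) :
  injective nu -> (forall i, z != nu i) -> f \is monic -> size f = N.+1 ->
  f.[z] / \prod_(i < N) (z - nu i)
    + \sum_(i < N) f.[nu i] / ((nu i - z) * \prod_(k < N | k != i) (nu i - nu k))
  = 1.
Proof.
move=> nu_inj z_nu f_monic f_size.
set s := z :: [seq nu i | i <- enum 'I_N].
have z_notin : z \notin [seq nu i | i <- enum 'I_N].
  by apply/mapP => -[i _ /eqP]; rewrite (negPf (z_nu i)).
have s_uniq : uniq s by rewrite /= z_notin map_inj_uniq ?enum_uniq.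
have s_size : size s = N.+1 by rewrite /= size_map size_enum_ord.
have := @lagrange_lead_coef _ s f s_uniq; rewrite s_size f_size => /(_ (leqnn _)).
rewrite -f_size -lead_coefE (monicP f_monic) => lagr.
rewrite [RHS]lagr big_cons /= big_map big_enum; congr (_ / _ + _).
  rewrite big_cons eqxx big_map big_enum_cond; apply: eq_bigl => i.
  by rewrite inE eq_sym z_nu.
apply: eq_bigr => i _; rewrite big_cons z_nu big_map big_enum_cond.
congr (_ / (_ * _)).
by apply: eq_bigl => k; rewrite inE (inj_eq nu_inj).
Qed.

Lemma horner_char_poly (R : comNzRingType) n (A : 'M[R]_n) (a : R) :
  (char_poly A).[a] = \det (a%:M - A).
Proof.
rewrite /char_poly -horner_evalE -det_map_mx; congr (\det _).
apply/matrixP=> i j; rewrite !mxE /= horner_evalE.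
by rewrite hornerD hornerN hornerMn hornerX hornerC.
Qed.

Lemma det_sub_conj (R : comNzRingType) n (P Q X : 'M[R]_n) (z : R) :
  Q *m P = 1%:M -> \det (z%:M - Q *m X *m P) = \det (z%:M - X).
Proof.
move=> QP; have -> : z%:M - Q *m X *m P = Q *m (z%:M - X) *m P.
  by rewrite mulmxBr mulmxBl scalar_mxC -(mulmxA z%:M) QP mulmx1.
by rewrite !det_mulmx mulrAC -det_mulmx QP det1 mul1r.
Qed.

Lemma invmx_diag (R : fieldType) n (d : 'rV[R]_n) : (forall i, d 0 i != 0) ->
  invmx (diag_mx d) = diag_mx (\row_i (d 0 i)^-1).
Proof.
move=> d_neq0.
have dd : diag_mx d *m diag_mx (\row_i (d 0 i)^-1) = 1%:M.
  by rewrite mulmx_diag; apply/matrixP => i j; rewrite !mxE divff.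
by rewrite -[RHS](mulKmx (proj1 (mulmx1_unit dd))) dd mulmx1.
Qed.

Lemma prod_ord_neq_lift (R : comNzRingType) n (F : 'I_n.+1 -> R) (j : 'I_n.+1) :
  \prod_(k < n.+1 | k != j) F k = \prod_(k < n) F (lift j k).
Proof.
rewrite big_mkcond (bigD1_ord j) //= eqxx mul1r.
by apply: eq_bigr => k _; rewrite eq_sym neq_lift.
Qed.

Lemma adj_diag_mx (R : comNzRingType) n (d : 'rV[R]_n) :
  \adj (diag_mx d) = diag_mx (\row_i \prod_(k < n | k != i) d 0 k).
Proof.
apply/matrixP => s r; rewrite !mxE /cofactor.
have [<-|rs] := eqVneq r s.
  rewrite -signr_odd addnn odd_double mul1r mulr1n.
  have -> : row' r (col' r (diag_mx d)) = diag_mx (\row_k d 0 (lift r k)).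
    by apply/matrixP => i j; rewrite !mxE (inj_eq lift_inj).
  rewrite det_diag [RHS]big_mkcond (bigD1_ord r) //= eqxx mul1r.
  by apply: eq_bigr => k _; rewrite eq_sym neq_lift !mxE.
case: (unliftP r s) rs => [k ->|-> /eqP//] _; rewrite mulr0n.
rewrite (expand_det_row _ k) big1 ?mulr0 // => l _.
by rewrite !mxE (negPf (neq_lift _ _)) mulr0n mul0r.
Qed.

Lemma adj_uniq (R : idomainType) n (M X : 'M[R]_n) :
  \det M != 0 -> X *m M = (\det M)%:M -> X = \adj M.
Proof.
move=> dM XM; apply/eqP; rewrite -subr_eq0.
have : \det M *: (X - \adj M) == 0.
  by rewrite -mul_mx_scalar -mul_mx_adj mulmxA mulmxBl XM mul_adj_mx subrr mul0mx.
by rewrite scalemx_eq0 (negPf dM).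
Qed.

(* adj_uniq handles the case of a nonzero determinant; apply it to the
   polynomial matrix 'X + B and evaluate at 'X = 0. *)
Lemma adj_conj (R : fieldType) n (g B : 'M[R]_n) : g \in unitmx ->
  \adj (g *m B *m invmx g) = g *m \adj B *m invmx g.
Proof.
move=> gU; pose G := map_mx (@polyC R) g; pose Gi := map_mx (@polyC R) (invmx g).
have GGi : G *m Gi = 1%:M by rewrite -map_mxM mulmxV // map_mx1.
have GiG : Gi *m G = 1%:M by rewrite -map_mxM mulVmx // map_mx1.
have conj_char : char_poly_mx (- (g *m B *m invmx g)) = G *m char_poly_mx (- B) *m Gi.
  rewrite /char_poly_mx mulmxBr mulmxBl scalar_mxC -(mulmxA 'X%:M) GGi mulmx1.
  by rewrite !map_mxN !map_mxM mulmxN mulNmx.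
have char_det (M : 'M[R]_n) : \det (char_poly_mx M) != 0.
  exact: monic_neq0 (char_poly_monic M).
have char_at0 (M : 'M[R]_n) : map_mx (horner_eval 0) (char_poly_mx (- M)) = M.
  apply/matrixP => i j; rewrite !mxE /= horner_evalE.
  by rewrite hornerD hornerMn hornerN hornerX hornerC mul0rn opprK add0r.
have evalC (M : 'M[R]_n) : map_mx (horner_eval 0) (map_mx (@polyC R) M) = M.
  by apply/matrixP => i j; rewrite !mxE /= horner_evalE hornerC.
have adj_char : \adj (char_poly_mx (- (g *m B *m invmx g)))
    = G *m \adj (char_poly_mx (- B)) *m Gi.
  symmetry; apply: adj_uniq; first exact: char_det.
  rewrite conj_char !mulmxA -(mulmxA _ Gi) GiG mulmx1 -(mulmxA _ _ (char_poly_mx _)).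
  rewrite mul_adj_mx !det_mulmx mulrAC -det_mulmx GGi det1 mul1r.
  by rewrite scalar_mxC -mulmxA GGi mulmx1.
have := congr1 (map_mx (horner_eval 0)) adj_char.
by rewrite map_mx_adj char_at0 !map_mxM map_mx_adj char_at0 !evalC.
Qed.

Lemma det_arrowhead_diag0 (R : comNzRingType) n (E : 'M[R]_n) (j e : 'I_n) :
  j != e -> E j j = 0 ->
  (forall i k, i != k -> i != e -> k != e -> E i k = 0) ->
  \det E = - (E j e * E e j * \prod_(i < n | (i != j) && (i != e)) E i i).
Proof.
move=> je Ejj Eoff.
have Erow_j k : k != e -> E j k = 0.
  by have [<-|jk] := eqVneq j k; [rewrite Ejj | exact: Eoff].
have Ecol_j i : i != e -> E i j = 0.
  by have [->|ij] := eqVneq i j; [rewrite Ejj | move=> ie; exact: Eoff].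
(* Only the transposition (j e) contributes to the Leibniz expansion. *)
rewrite /determinant (bigD1 (tperm j e)) //= [X in _ + X]big1 ?addr0; last first.
  move=> s s_tperm; suff [i Ei0] : exists i, E i (s i) = 0.
    by rewrite (bigD1 i) //= Ei0 mul0r mulr0.
  have [sj|sj] := eqVneq (s j) e; last by exists j; exact: Erow_j.
  have [se|se] := eqVneq (s e) j; last first.
    exists ((s^-1)%g j); rewrite permKV Ecol_j //.
    by apply: contraNneq se => <-; rewrite permKV.
  have [i] : exists i, s i != tperm j e i.
    apply/existsP; apply: contraNT s_tperm; rewrite negb_exists => /forallP s_eq.
    by apply/eqP/permP => i; apply/eqP; rewrite -[_ == _]negbK s_eq.
  have [->|ij] := eqVneq i j; first by rewrite tpermL sj eqxx.
  have [->|ie] := eqVneq i e; first by rewrite tpermR se eqxx.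
  rewrite tpermD 1?eq_sym // => si_i; exists i; apply: Eoff => //.
  by rewrite -sj (inj_eq perm_inj).
rewrite odd_tperm je expr1 mulN1r (bigD1 j) //= tpermL (bigD1 e) 1?eq_sym //=.
rewrite tpermR mulrA; congr (- (_ * _)).
by apply: eq_bigr => i /andP [ij ie]; rewrite tpermD // eq_sym.
Qed.

Lemma det_sub_arrow (R : comNzRingType) m (mu : 'I_m -> R) (c : 'cV[R]_m)
    (b : 'rV[R]_m) (d : R) (j : 'I_m) :
  \det ((mu j)%:M - block_mx (diag_mx (\row_i mu i)) c b d%:M)
  = - (c j 0 * b 0 j * \prod_(k < m | k != j) (mu j - mu k)).
Proof.
set E := _ - _.
have Eul i k : E (lshift 1 i) (lshift 1 k) = (mu j - mu i) *+ (i == k).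
  by rewrite mxE [in X in _ + X]mxE block_mxEul !mxE (inj_eq (@lshift_inj _ _)) mulrnBl.
have Eur i : E (lshift 1 i) (rshift m ord0) = - c i 0.
  by rewrite mxE [in X in _ + X]mxE block_mxEur !mxE eq_lrshift mulr0n sub0r.
have Edl k : E (rshift m ord0) (lshift 1 k) = - b 0 k.
  by rewrite mxE [in X in _ + X]mxE block_mxEdl !mxE eq_rlshift mulr0n sub0r.
have lshift_cases (i : 'I_(m + 1)) : i != rshift m ord0 -> {i' | i = lshift 1 i'}.
  rewrite -(splitK i); case: (split i) => [i' _|k]; first by exists i'.
  by rewrite (ord1 k) eqxx.
rewrite (@det_arrowhead_diag0 _ _ E (lshift 1 j) (rshift m ord0)).
- rewrite Eur Edl mulrNN big_split_ord /= [\prod_(i < 1 | _) _]big1 ?mulr1 => [|k].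
    2: by rewrite (ord1 k) eqxx andbF.
  congr (- (_ * _)); apply: eq_big => [k|k _].
    by rewrite (inj_eq (@lshift_inj _ _)) eq_lrshift andbT.
  by rewrite Eul eqxx mulr1n.
- by rewrite eq_lrshift.
- by rewrite Eul subrr mul0rn.
move=> i k ik /lshift_cases [i' ii'] /lshift_cases [k' kk'].
by move: ik; rewrite ii' kk' Eul (inj_eq (@lshift_inj _ _)) => /negPf ->.
Qed.

Lemma comm_diag_mx_is_diag (R : idomainType) n (d : 'rV[R]_n) (M : 'M[R]_n) :
  injective (d 0) -> comm_mx (diag_mx d) M -> is_diag_mx M.
Proof.
move=> d_inj dM; apply/is_diag_mxP => i j ij.
have /matrixP/(_ i j)/eqP := dM; rewrite mul_diag_mx mul_mx_diag !mxE.
rewrite [d 0 i * _]mulrC -subr_eq0 -mulrBr mulf_eq0 subr_eq0.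
by case/orP => [/eqP // | /eqP /d_inj eq_ij]; rewrite eq_ij eqxx in ij.
Qed.

Lemma conj_bordered_mx (R : pzRingType) m (g gi A L : 'M[R]_m) (u c : 'cV[R]_m)
    (v b : 'rV[R]_m) (delta d : R) :
  block_mx gi 0 0 1%:M *m block_mx A u v delta%:M *m block_mx g 0 0 1%:M
    = block_mx L c b d%:M ->
  c = gi *m u /\ b = v *m g.
Proof.
rewrite !mulmx_block !(mul0mx, mulmx0, mul1mx, mulmx1, addr0, add0r).
by case/eq_block_mx => _ -> -> _.
Qed.

Section TransposedEigenbasis.
Variables (F : fieldType) (m : nat) (mu : 'I_m.+1 -> F) (A g h : 'M[F]_m.+1).
Hypotheses (mu_inj : injective mu) (g_unit : g \in unitmx).
Hypothesis h_last : forall j, h ord_max j = 1.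
Hypotheses (Ag : A *m g = g *m diag_mx (\row_i mu i))
  (Ah : A^T *m h = h *m diag_mx (\row_i mu i)).

Lemma tr_eigvec_mul_is_diag : is_diag_mx (g^T *m h).
Proof.
apply: (@comm_diag_mx_is_diag _ _ (\row_i mu i)) => [i j|].
  by rewrite !mxE => /mu_inj.
have gA : diag_mx (\row_i mu i) *m g^T = g^T *m A^T.
  by rewrite -[diag_mx _]tr_diag_mx -trmx_mul -Ag trmx_mul.
by rewrite /comm_mx mulmxA gA -mulmxA Ah mulmxA.
Qed.

(* The diagonal of g^T h is determined by the last row of h. *)
Let tr_eigvec_last_row :
  exists2 e : 'rV_m.+1, h = (invmx g)^T *m diag_mx e
    & forall j, invmx g j ord_max * e 0 j = 1.
Proof.
have /diag_mxP [e gh] := tr_eigvec_mul_is_diag.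
have h_e : h = (invmx g)^T *m diag_mx e by rewrite trmx_inv -gh mulKmx ?unitmx_tr.
by exists e => // j; rewrite -(h_last j) h_e mul_mx_diag !mxE.
Qed.

Lemma invmx_last_col_neq0 j : invmx g j ord_max != 0.
Proof.
have [e _ /(_ j) we] := tr_eigvec_last_row.
by apply: contra_eq_neq we => ->; rewrite mul0r eq_sym oner_neq0.
Qed.

Lemma tr_eigvecE : h = (invmx g)^T *m diag_mx (\row_j (invmx g j ord_max)^-1).
Proof.
have [e -> we] := tr_eigvec_last_row; congr (_ *m diag_mx _).
apply/rowP => j; apply: (mulfI (invmx_last_col_neq0 j)).
by rewrite mxE we divff ?invmx_last_col_neq0.
Qed.

End TransposedEigenbasis.

Section LeadingSubmatrices.
Variables (C : numClosedFieldType) (n : nat) (x : 'M[C]_n).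

Lemma lead_sub_tr k : lead_sub x^T k = (lead_sub x k)^T.
Proof.
apply/matrixP => i j; rewrite !mxE /mxentry.
by case: insub => [i'|]; case: insub => [j'|] //; rewrite mxE.
Qed.

Lemma lead_sub_succ k : lead_sub x (k + 1) = block_mx (lead_sub x k)
  (\col_i mxentry x i k) (\row_j mxentry x k j) (mxentry x k k)%:M.
Proof.
rewrite -[LHS]submxK; congr block_mx; apply/matrixP => i j;
  by rewrite !mxE /= ?(ord1 i) ?(ord1 j) /= ?addn0 ?eqxx ?mulr1n.
Qed.

Lemma lead_sub_minor k (z : C) :
  row' ord_max (col' ord_max (z%:M - lead_sub x k.+1)) = z%:M - lead_sub x k.
Proof. by apply/matrixP => i j; rewrite !mxE !lift_max (inj_eq lift_inj). Qed.

Lemma eigen_ordering_multiset k (a : 'M[C]_k) (mu : 'I_k -> C) :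
  eigen_ordering a mu -> eigen_multiset a [seq mu i | i <- enum 'I_k].
Proof. by rewrite /eigen_multiset big_map big_enum. Qed.

Lemma generic_ordering_inj k (mu : 'I_k -> C) : generic x -> (1 <= k <= n)%N ->
  eigen_ordering (lead_sub x k) mu -> injective mu.
Proof.
move=> [x_uniq _] k_n /eigen_ordering_multiset mu_x.
by apply/injectiveP; apply: x_uniq mu_x.
Qed.

Lemma generic_lead_ordering (mu : forall k, 'I_k -> C) k : generic x ->
  (forall k, (1 <= k <= n)%N -> eigen_ordering (lead_sub x k) (mu k)) ->
  (k <= n)%N -> injective (mu k) /\ eigen_ordering (lead_sub x k) (mu k).
Proof.
move=> x_gen x_ord; case: k => [_|k k_n].
  by split=> [[]//|]; rewrite /eigen_ordering /char_poly det_mx00 big_ord0.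
have k_n' : (1 <= k.+1 <= n)%N by rewrite k_n.
by split; [exact: generic_ordering_inj x_gen k_n' (x_ord _ k_n') | exact: x_ord].
Qed.

Lemma generic_Pk_succ_neq0 k (mu : 'I_k -> C) (nu : 'I_k.+1 -> C) (j : 'I_k) :
  generic x -> (1 <= k <= n - 1)%N -> eigen_ordering (lead_sub x k) mu ->
  eigen_ordering (lead_sub x k.+1) nu -> (Pk x k.+1).[mu j] != 0.
Proof.
move=> [_ x_interlace] k_n mu_x nu_x; rewrite /Pk nu_x horner_prod_XsubC.
rewrite prodf_seq_neq0; apply/allP => i _ /=; rewrite subr_eq0; apply/eqP => mu_nu.
have := x_interlace k _ _ k_n (eigen_ordering_multiset mu_x)
  (eigen_ordering_multiset nu_x) (mu j) (map_f _ (mem_enum _ j)).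
by rewrite mu_nu map_f ?mem_enum.
Qed.

End LeadingSubmatrices.

Lemma Pi_succE (C : numClosedFieldType) (mu : forall k, 'I_k -> C) p :
  injective (mu p) -> (forall j i, mu p.+1 j != mu p i) ->
  Pi mu p.+1 = diag_mx (\row_j (\prod_(k < p.+1 | k != j) (mu p.+1 j - mu p.+1 k)
                                / \prod_(i < p) (mu p.+1 j - mu p i))).
Proof.
move=> nu_inj z_nu; congr diag_mx; apply/rowP => j; rewrite !mxE /=.
set z := mu p.+1 j; pose f := \prod_(k < p) ('X - (mu p.+1 (lift j k))%:P).
have f_at t : f.[t] = \prod_(k < p.+1 | k != j) (t - mu p.+1 k).
  by rewrite horner_prod_XsubC prod_ord_neq_lift.
have f_size : size f = p.+1.
  by rewrite size_prod_XsubC -[index_enum _]enumT -cardT card_ord.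
have := monic_residue_sum nu_inj (z_nu j) (monic_prod_XsubC _ _ _) f_size.
move/(canRL (addrK _)); rewrite -/z -/f f_at => ->; congr (1 - _).
apply: eq_bigr => i _; rewrite f_at (bigD1 j) //=.
have D_neq0 : \prod_(k < p | k != i) (mu p i - mu p k) != 0.
  rewrite prodf_seq_neq0; apply/allP => k _; apply/implyP => ki.
  by rewrite subr_eq0 (inj_eq nu_inj) eq_sym.
have nu_z : mu p i - z != 0 by rewrite subr_eq0 eq_sym z_nu.
by rewrite -/z; field; rewrite D_neq0 nu_z subr_eq0 z_nu.
Qed.

Section DualCoordinates.
Variables (C : numClosedFieldType) (n p : nat) (x : 'M[C]_n).
Variable mu : forall k, 'I_k -> C.
(* Otherwise Set Implicit Arguments makes the index k of mu implicit. *)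
Arguments mu : clear implicits.
Variables (g : 'M[C]_p.+1) (c : 'cV[C]_p.+1) (b : 'rV[C]_p.+1) (d : C).
Hypotheses (g_unit : g \in unitmx) (g_last : forall j, g ord_max j = 1).
Hypothesis x_diag : lead_sub x p.+1 = g *m Lam (mu p.+1) *m invmx g.
Hypothesis x_arrow : block_mx (invmx g) 0 0 1%:M *m lead_sub x (p.+1 + 1)
  *m block_mx g 0 0 1%:M = block_mx (Lam (mu p.+1)) c b d%:M.

Lemma horner_Pk_pred_eigen j : (Pk x p).[mu p.+1 j]
  = \prod_(k < p.+1 | k != j) (mu p.+1 j - mu p.+1 k) * invmx g j ord_max.
Proof.
set z := mu p.+1 j.
have x_conj : z%:M - lead_sub x p.+1
    = g *m diag_mx (\row_k (z - mu p.+1 k)) *m invmx g.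
  have -> : diag_mx (\row_k (z - mu p.+1 k)) = z%:M - Lam (mu p.+1).
    by apply/matrixP => i k; rewrite !mxE mulrnBl.
  by rewrite x_diag mulmxBr mulmxBl scalar_mxC -(mulmxA z%:M) mulmxV ?mulmx1.
have -> : (Pk x p).[z] = \adj (z%:M - lead_sub x p.+1) ord_max ord_max.
  rewrite /Pk horner_char_poly mxE /cofactor lead_sub_minor.
  by rewrite -signr_odd addnn odd_double mul1r.
rewrite x_conj adj_conj // adj_diag_mx mxE (bigD1 j) //= big1 => [|k kj].
  rewrite addr0 mul_mx_diag !mxE g_last mul1r; congr (_ * _).
  by apply: eq_bigr => k _; rewrite mxE.
by rewrite mul_mx_diag !mxE (bigD1 j) 1?eq_sym //= !mxE subrr mul0r !mulr0 mul0r.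
Qed.

Lemma horner_Pk_succ_eigen j : (Pk x p.+2).[mu p.+1 j]
  = - (c j 0 * b 0 j * \prod_(k < p.+1 | k != j) (mu p.+1 j - mu p.+1 k)).
Proof.
have GiG : block_mx (invmx g) 0 0 1%:M *m block_mx g 0 0 1%:M = 1%:M :> 'M_(p.+1 + 1).
  rewrite mulmx_block !(mul0mx, mulmx0, mul1mx, addr0, add0r) mulVmx //.
  by rewrite -scalar_mx_block.
have -> : p.+2 = (p.+1 + 1)%N by rewrite addn1.
by rewrite /Pk horner_char_poly -(det_sub_conj _ _ GiG) x_arrow det_sub_arrow.
Qed.

Lemma dual_b_neq0 : (forall j, (Pk x p.+2).[mu p.+1 j] != 0) -> forall j, b 0 j != 0.
Proof.
move=> P_neq0 j; apply: contraNneq (P_neq0 j) => b0.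
by rewrite horner_Pk_succ_eigen b0 mulr0 mul0r oppr0.
Qed.

Hypothesis mu_inj : injective (mu p.+1).
Hypothesis x_ord : eigen_ordering (lead_sub x p.+1) (mu p.+1).

Let eigen_gap_neq0 j : \prod_(k < p.+1 | k != j) (mu p.+1 j - mu p.+1 k) != 0.
Proof.
rewrite prodf_seq_neq0; apply/allP => k _; apply/implyP => kj.
by rewrite subr_eq0 (inj_eq mu_inj) eq_sym.
Qed.

Lemma Sigma_dualE : Sigma x mu p.+1 = diag_mx (\row_j (c j 0 * b 0 j)).
Proof.
have P'_eigen j : (Pk x p.+1)^`().[mu p.+1 j]
    = \prod_(k < p.+1 | k != j) (mu p.+1 j - mu p.+1 k).
  by rewrite /Pk x_ord deriv_prod_XsubC_at.
rewrite /Sigma /polyLam invmx_diag => [|j]; last by rewrite mxE P'_eigen.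
rewrite mulmx_diag; apply/matrixP => i j; rewrite !mxE -mulNrn; congr (_ *+ _).
by rewrite horner_Pk_succ_eigen P'_eigen; field; rewrite eigen_gap_neq0.
Qed.

Lemma Pi_dualE : injective (mu p) -> eigen_ordering (lead_sub x p) (mu p) ->
  (forall j, invmx g j ord_max != 0) ->
  Pi mu p.+1 = diag_mx (\row_j (invmx g j ord_max)^-1).
Proof.
move=> nu_inj xp_ord w_neq0.
have Pp_eigen j : \prod_(i < p) (mu p.+1 j - mu p i)
    = \prod_(k < p.+1 | k != j) (mu p.+1 j - mu p.+1 k) * invmx g j ord_max.
  by rewrite -horner_Pk_pred_eigen /Pk xp_ord horner_prod_XsubC.
rewrite Pi_succE // => [|j i]; last first.
  have : \prod_(i < p) (mu p.+1 j - mu p i) != 0 by rewrite Pp_eigen mulf_neq0.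
  by apply: contraNneq => z_nu; rewrite (bigD1 i) //= z_nu subrr mul0r.
congr diag_mx; apply/rowP => j; rewrite !mxE Pp_eigen invfM mulrA.
by rewrite divff ?mul1r.
Qed.

End DualCoordinates.

Theorem mainTheorem3 (C : numClosedFieldType) (n : nat) (x : 'M[C]_n)
    (mu : forall k : nat, 'I_k -> C) :
  (2 <= n)%N ->
  generic x ->
  (forall k : nat, (1 <= k <= n)%N -> eigen_ordering (lead_sub x k) (mu k)) ->
  forall (m : nat) (b bt : 'rV[C]_m), (1 <= m <= n - 1)%N ->
    dual_b x mu m b -> dual_b x^T mu m bt ->
    diag_mx bt = Pi mu m *m invmx (diag_mx b) *m Sigma x mu m.
Proof.
move=> _ x_gen x_ord [//|p] b bt /andP [_ p_lt].
move=> [g [c [d [g_unit g_last x_diag x_arrow]]]].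
move=> [h [? [? [h_unit h_last xT_diag xT_arrow]]]].
have [p_n p1_n p1_n1 p2_n] : [/\ (p <= n)%N, (p.+1 <= n)%N, (1 <= p.+1 <= n - 1)%N
  & (1 <= p.+2 <= n)%N] by split; lia.
have [nu_inj xp_ord] := generic_lead_ordering x_gen x_ord p_n.
have [mu_inj x_ord1] := generic_lead_ordering x_gen x_ord p1_n.
have [g_last' h_last'] : (forall j, g ord_max j = 1) /\ (forall j, h ord_max j = 1).
  by split=> j; [exact: g_last | exact: h_last].
have Ag : lead_sub x p.+1 *m g = g *m Lam (mu p.+1) by rewrite x_diag mulmxKV.
have Ah : (lead_sub x p.+1)^T *m h = h *m Lam (mu p.+1).
  by rewrite -lead_sub_tr xT_diag mulmxKV.
have := x_arrow; rewrite lead_sub_succ => /conj_bordered_mx [c_u _].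
have := xT_arrow; rewrite lead_sub_tr lead_sub_succ tr_block_mx tr_scalar_mx.
move=> /conj_bordered_mx [_ bt_u].
have b_neq0 := dual_b_neq0 g_unit x_arrow
  (fun j => generic_Pk_succ_neq0 j x_gen p1_n1 x_ord1 (x_ord _ p2_n)).
have w_neq0 := invmx_last_col_neq0 mu_inj g_unit h_last' Ag Ah.
rewrite (Pi_dualE g_unit g_last' x_diag mu_inj nu_inj xp_ord w_neq0).
rewrite (Sigma_dualE g_unit x_arrow mu_inj x_ord1) invmx_diag // !mulmx_diag.
congr diag_mx; apply/rowP => j.
rewrite bt_u (tr_eigvecE mu_inj g_unit h_last' Ag Ah) mulmxA -trmx_mul -c_u.
by rewrite mul_mx_diag !mxE; field; rewrite b_neq0 w_neq0.
Qed.
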